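(* There exist $\delta_1>0$ and $C_1>0$ such that for every $(\ell,\xi)\in[-\delta_1,\delta_1]\times[-\delta_1,\delta_1]$, $|\lambda^+_{0,\ell,\xi}-\lambda^+_{-1,\ell,\xi}|\ge C_1|(\ell,\xi)|$ and $|\lambda^-_{0,\ell,\xi}-\lambda^-_{1,\ell,\xi}|\ge C_1|(\ell,\xi)|$, and for every $n\in\mathbb Z$ and sign $\#\in\{+,-\}$ with $(n,\#)\notin\{(0,+),(0,-),(1,-),(-1,+)\}$, $|\lambda^\#_{n,\ell,\xi}|\ge C_1$.
   Context: Fix $\kappa>0$ and set $\mu_0:=\kappa/\tanh(\kappa)$. Let $F:\mathbb R\to\mathbb R$ be the odd analytic function with $F(r)=\sqrt{r\tanh r}$ for $r\ge0$. For $n\in\mathbb Z$ and $(\ell,\xi)\in\mathbb R^2$ set $|n\kappa|_{\ell,\xi}:=\sqrt{(n\kappa+\xi)^2+\ell^2}$ and $\lambda^\pm_{n,\ell,\xi}:=i\big(n\kappa+\xi\pm\sqrt{\mu_0}\,F(|n\kappa|_{\ell,\xi})\big)$; these are the eigenvalues of $\begin{pmatrix} i(n\kappa+\xi) & F(|n\kappa|_{\ell,\xi})^2\\ -\mu_0 & i(n\kappa+\xi)\end{pmatrix}$. Here $|(\ell,\xi)|=\sqrt{\ell^2+\xi^2}$. *)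

From Stdlib Require Import Reals Lra ZArith.
From Coquelicot Require Import Coquelicot.
Open Scope R_scope.

Definition mu0 (kappa : R) : R := kappa / tanh kappa.

Definition F (r : R) : R :=
  if Rle_dec 0 r then sqrt (r * tanh r) else - sqrt ((- r) * tanh (- r)).

Definition nk_norm (kappa : R) (n : Z) (l xi : R) : R :=
  sqrt ((IZR n * kappa + xi) ^ 2 + l ^ 2).

Definition lam (kappa : R) (s : bool) (n : Z) (l xi : R) : C :=
  (0, IZR n * kappa + xi
       + (if s then 1 else -1) * sqrt (mu0 kappa) * F (nk_norm kappa n l xi)).

Definition pnorm (l xi : R) : R := sqrt (l ^ 2 + xi ^ 2).

Definition excluded (n : Z) (s : bool) : Prop :=
  n = 0%Z \/ (n = 1%Z /\ s = false) \/ (n = (-1)%Z /\ s = true).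

From Stdlib Require Import Reals ZArith Lra Psatz Lia.
From Coquelicot Require Import Coquelicot.
Open Scope R_scope.

(* Write [omega r = sqrt mu0 * F r], so [omega r ^ 2 = mu0 r tanh r] and [mu0 tanh kappa = kappa];
   by the symmetry lambda^-_n(l, xi) = - lambda^+_(-n)(l, -xi) only the sign [+] matters.
   Near the resonances, [omega r >= r (1 - r)] for small [r], while [omega rho <= kappa + beta r]
   whenever [rho <= kappa + r], with [beta < 1] because [2 kappa < sinh (2 kappa)]; so at
   [r = |(l, xi)|] the eigenvalues lambda^+_0 and lambda^+_(-1) are [(1 - beta) r / 2] apart.
   For [n >= 1] the eigenvalue is at least [kappa / 2] in modulus.  For [n = -m <= -2], strict
   subadditivity [tanh (m kappa) <= m tanh kappa - (2 tanh kappa - tanh (2 kappa))] keeps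
   [omega] a fixed distance below [m kappa]. *)

Lemma tanh_exp x : tanh x = 1 - 2 / (exp (2 * x) + 1).
Proof.
  unfold tanh, sinh, cosh.
  replace (2 * x) with (x + x) by ring.
  rewrite exp_plus, exp_Ropp.
  pose proof (exp_pos x).
  field; split; nra.
Qed.

Lemma tanh_0 : tanh 0 = 0.
Proof. rewrite tanh_exp, Rmult_0_r, exp_0. field. Qed.

Lemma tanh_lt_1 x : tanh x < 1.
Proof.
  rewrite tanh_exp. pose proof (exp_pos (2 * x)).
  assert (0 < 2 / (exp (2 * x) + 1)) by (apply Rdiv_lt_0_compat; lra).
  lra.
Qed.

Lemma tanh_le x y : x <= y -> tanh x <= tanh y.
Proof.
  intros hxy. rewrite !tanh_exp.
  assert (hu := exp_pos (2 * x)).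
  assert (huv : exp (2 * x) <= exp (2 * y)).
  { destruct (Rle_lt_or_eq_dec x y hxy) as [h | ->]; [|lra].
    apply Rlt_le, exp_increasing; lra. }
  enough (2 / (exp (2 * y) + 1) <= 2 / (exp (2 * x) + 1)) by lra.
  apply Rmult_le_compat_l; [lra|].
  apply Rinv_le_contravar; lra.
Qed.

Lemma tanh_nonneg x : 0 <= x -> 0 <= tanh x.
Proof. intros hx. rewrite <- tanh_0. now apply tanh_le. Qed.

Lemma tanh_ge_frac x : 0 <= x -> x / (1 + x) <= tanh x.
Proof.
  intros hx. rewrite tanh_exp. pose proof (exp_ineq1_le (2 * x)).
  enough (2 / (exp (2 * x) + 1) <= 2 / (2 * (1 + x))).
  { replace (x / (1 + x)) with (1 - 2 / (2 * (1 + x))) by (field; lra). lra. }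
  apply Rmult_le_compat_l; [lra|].
  apply Rinv_le_contravar; lra.
Qed.

Lemma tanh_pos x : 0 < x -> 0 < tanh x.
Proof.
  intros hx. apply Rlt_le_trans with (x / (1 + x)).
  - apply Rdiv_lt_0_compat; lra.
  - apply tanh_ge_frac; lra.
Qed.

Lemma tanh_plus x y : tanh (x + y) = (tanh x + tanh y) / (1 + tanh x * tanh y).
Proof.
  rewrite !tanh_exp. replace (2 * (x + y)) with (2 * x + 2 * y) by ring.
  rewrite exp_plus.
  pose proof (exp_pos (2 * x)). pose proof (exp_pos (2 * y)).
  set (u := exp (2 * x)) in *. set (v := exp (2 * y)) in *.
  replace (1 + (1 - 2 / (u + 1)) * (1 - 2 / (v + 1))) with (2 * (u * v + 1) / ((u + 1) * (v + 1)))
    by (field; lra).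
  field; repeat split; nra.
Qed.

Lemma tanh_plus_le x y : 0 <= x -> 0 <= y -> tanh (x + y) <= tanh x + tanh y.
Proof.
  intros hx hy. rewrite tanh_plus.
  pose proof (tanh_nonneg x hx). pose proof (tanh_nonneg y hy).
  apply Rle_div_l; nra.
Qed.

Lemma sinh_gt_id x : 0 < x -> x < sinh x.
Proof.
  intros hx.
  destruct (MVT_cor2 (sinh - id)%F (fun c => cosh c - 1) 0 x hx) as [c [E hc]].
  { intros c _. apply derivable_pt_lim_minus.
    - apply derivable_pt_lim_sinh.
    - apply derivable_pt_lim_id. }
  unfold minus_fct, id in E. rewrite sinh_0 in E.
  assert (1 < cosh c).
  { unfold cosh. rewrite exp_Ropp. pose proof (exp_ineq1 c ltac:(lra)).
    pose proof (exp_pos c).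
    replace (exp c + / exp c) with (2 + (exp c - 1) ^ 2 / exp c) by (field; lra).
    assert (0 < (exp c - 1) ^ 2 / exp c) by (apply Rdiv_lt_0_compat; nra).
    lra. }
  nra.
Qed.

Lemma cosh_pos x : 0 < cosh x.
Proof. unfold cosh. pose proof (exp_pos x). pose proof (exp_pos (- x)). lra. Qed.

(* [tanh x < x] is [sinh x < x cosh x], and [x cosh x - sinh x] has derivative [x sinh x > 0]. *)
Lemma tanh_lt_id x : 0 < x -> tanh x < x.
Proof.
  intros hx.
  destruct (MVT_cor2 (id * cosh - sinh)%F (fun c => 1 * cosh c + c * sinh c - cosh c) 0 x hx)
    as [c [E hc]].
  { intros c _. apply derivable_pt_lim_minus; [apply derivable_pt_lim_mult|].
    - apply derivable_pt_lim_id.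
    - apply derivable_pt_lim_cosh.
    - apply derivable_pt_lim_sinh. }
  unfold minus_fct, mult_fct, id in E. rewrite sinh_0 in E. ring_simplify in E.
  pose proof (sinh_gt_id c ltac:(lra)).
  assert (0 < c * sinh c * x) by (apply Rmult_lt_0_compat; [apply Rmult_lt_0_compat|]; lra).
  assert (sinh x < x * cosh x) by lra.
  unfold tanh. apply Rlt_div_l; [apply cosh_pos | lra].
Qed.

Lemma tanh_le_id x : 0 <= x -> tanh x <= x.
Proof.
  intros [hx | <-].
  - now apply Rlt_le, tanh_lt_id.
  - rewrite tanh_0; lra.
Qed.

Lemma Cmod_imag a : Cmod (0, a) = Rabs a.
Proof.
  unfold Cmod. simpl. rewrite <- sqrt_Rsqr_abs. f_equal. unfold Rsqr. ring.
Qed.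

Lemma Cmod_imag_sub a b : Cmod ((0, a) - (0, b))%C = Rabs (a - b).
Proof.
  rewrite <- Cmod_imag. unfold Cminus, Cplus, Copp. simpl. f_equal. f_equal; ring.
Qed.

Lemma Cmod_opp_sub a b : Cmod (- a - - b)%C = Cmod (a - b)%C.
Proof. rewrite <- Cmod_opp. f_equal. destruct a, b. unfold Cminus, Cplus, Copp. simpl. f_equal; ring. Qed.

Lemma pnorm_opp_r l xi : pnorm l (- xi) = pnorm l xi.
Proof. unfold pnorm. f_equal. ring. Qed.

Lemma nk_norm_0 k l xi : nk_norm k 0 l xi = pnorm l xi.
Proof. unfold nk_norm, pnorm. f_equal. simpl. ring. Qed.

Lemma nk_norm_le k n l xi : nk_norm k n l xi <= Rabs (IZR n * k) + pnorm l xi.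
Proof.
  replace (nk_norm k n l xi) with (Cmod (RtoC (IZR n * k) + (xi, l))%C)
    by (unfold nk_norm, Cmod; simpl; f_equal; ring).
  replace (pnorm l xi) with (Cmod (xi, l)) by (unfold pnorm, Cmod; simpl; f_equal; ring).
  rewrite <- Cmod_R. apply Cmod_triangle.
Qed.

Lemma lam_false_opp k n l xi : lam k false n l xi = (- lam k true (- n) l (- xi))%C.
Proof.
  assert (hnorm : nk_norm k (- n) l (- xi) = nk_norm k n l xi).
  { unfold nk_norm. rewrite opp_IZR. f_equal. ring. }
  unfold lam, Copp. rewrite hnorm, opp_IZR. simpl. f_equal; ring.
Qed.

Lemma not_excluded_opp n : ~ excluded n false -> ~ excluded (- n) true.
Proof.
  unfold excluded. intros hn hex. apply hn.
  destruct hex as [h | [[h hs] | [h hs]]].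
  - left. lia.
  - discriminate.
  - right. left. split; [lia | reflexivity].
Qed.

Section Dispersion.

Variable k : R.
Hypothesis k_pos : 0 < k.

Local Notation t := (tanh k).

Lemma mu0_mul_tanh : mu0 k * t = k.
Proof. unfold mu0. pose proof (tanh_pos k k_pos). field. lra. Qed.

Lemma mu0_ge_1 : 1 <= mu0 k.
Proof.
  pose proof (tanh_pos k k_pos). pose proof (tanh_lt_id k k_pos). pose proof mu0_mul_tanh.
  nra.
Qed.

Definition omega (r : R) : R := sqrt (mu0 k) * F r.

Lemma omega_nonneg r : 0 <= r -> 0 <= omega r.
Proof.
  intros hr. unfold omega, F. destruct (Rle_dec 0 r); [|lra].
  apply Rmult_le_pos; apply sqrt_pos.
Qed.

Lemma omega_sq r : 0 <= r -> omega r ^ 2 = mu0 k * (r * tanh r).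
Proof.
  intros hr. pose proof (tanh_nonneg r hr). pose proof mu0_ge_1.
  unfold omega, F. destruct (Rle_dec 0 r); [|lra].
  rewrite Rpow_mult_distr, !pow2_sqrt; nra.
Qed.

Lemma omega_le r b : 0 <= r -> 0 <= b -> mu0 k * (r * tanh r) <= b ^ 2 -> omega r <= b.
Proof.
  intros hr hb h. apply Rsqr_incr_0_var; [|exact hb].
  rewrite !Rsqr_pow2, omega_sq; assumption.
Qed.

Lemma omega_ge r b : 0 <= r -> b ^ 2 <= mu0 k * (r * tanh r) -> b <= omega r.
Proof.
  intros hr h. apply Rsqr_incr_0_var; [|now apply omega_nonneg].
  rewrite !Rsqr_pow2, omega_sq; assumption.
Qed.

Lemma omega_ge_near_0 r : 0 <= r <= 1 -> r * (1 - r) <= omega r.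
Proof.
  intros hr. apply omega_ge; [lra|].
  pose proof mu0_ge_1.
  assert (h1 : r * (r / (1 + r)) <= r * tanh r).
  { apply Rmult_le_compat_l; [lra|]. apply tanh_ge_frac; lra. }
  assert (h2 : (r * (1 - r)) ^ 2 <= r * (r / (1 + r))).
  { replace ((r * (1 - r)) ^ 2) with (r * (r / (1 + r)) * ((1 - r) * (1 - r ^ 2)))
      by (field; lra).
    rewrite <- (Rmult_1_r (r * (r / (1 + r)))) at 2.
    apply Rmult_le_compat_l; [|nra].
    apply Rmult_le_pos; [|apply Rle_div_r]; lra. }
  assert (0 <= r * tanh r) by (apply Rmult_le_pos; [|apply tanh_nonneg]; lra).
  nra.
Qed.

Lemma tanh_k_plus_le r : 0 <= r -> tanh (k + r) <= t + (1 - t ^ 2) * r.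
Proof.
  intros hr. rewrite tanh_plus.
  pose proof (tanh_pos k k_pos). pose proof (tanh_lt_1 k).
  pose proof (tanh_nonneg r hr). pose proof (tanh_le_id r hr).
  apply Rle_trans with (t + (1 - t ^ 2) * tanh r).
  - apply Rle_div_l; [nra|].
    assert (0 <= (1 - t ^ 2) * t * tanh r ^ 2)
      by (apply Rmult_le_pos; [apply Rmult_le_pos|]; nra).
    nra.
  - apply Rplus_le_compat_l, Rmult_le_compat_l; nra.
Qed.

Definition gam : R := (1 - t ^ 2) * mu0 k.
Definition beta : R := (1 + gam) / 2.

(* With [u = exp (2 k)], [gam = 4 k u / (u ^ 2 - 1)], so [gam < 1] is [2 k < sinh (2 k)]. *)
Lemma gam_lt_1 : gam < 1.
Proof.
  pose proof (sinh_gt_id (2 * k) ltac:(lra)) as hsinh.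
  unfold sinh in hsinh. rewrite exp_Ropp in hsinh.
  pose proof (exp_ineq1 (2 * k) ltac:(lra)).
  set (u := exp (2 * k)) in *.
  assert (hu : 1 < u) by lra.
  assert (hgam : gam = 4 * k * u / (u ^ 2 - 1)).
  { unfold gam, mu0. rewrite tanh_exp. fold u. field. repeat split; nra. }
  assert (h : 4 * k * u < (u - / u) * u) by (apply Rmult_lt_compat_r; lra).
  replace ((u - / u) * u) with (u ^ 2 - 1) in h by (field; lra).
  rewrite hgam. apply Rlt_div_l; [nra | lra].
Qed.

Lemma gam_pos : 0 < gam.
Proof.
  pose proof (tanh_pos k k_pos). pose proof (tanh_lt_1 k). pose proof mu0_ge_1.
  unfold gam. apply Rmult_lt_0_compat; nra.
Qed.

Lemma omega_le_near_k r rho : 0 <= r -> 0 <= rho <= k + r -> omega rho <= k + beta * r.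
Proof.
  intros hr hrho. pose proof gam_pos. pose proof gam_lt_1. pose proof mu0_ge_1.
  apply omega_le; [lra | unfold beta; nra |].
  pose proof (tanh_le rho (k + r) ltac:(lra)). pose proof (tanh_k_plus_le r hr).
  pose proof (tanh_nonneg rho ltac:(lra)). pose proof (tanh_pos k k_pos). pose proof (tanh_lt_1 k).
  assert (h1 : rho * tanh rho <= (k + r) * (t + (1 - t ^ 2) * r)).
  { apply Rmult_le_compat; nra. }
  apply Rle_trans with (mu0 k * ((k + r) * (t + (1 - t ^ 2) * r))).
  { apply Rmult_le_compat_l; lra. }
  replace (mu0 k * ((k + r) * (t + (1 - t ^ 2) * r))) with ((k + r) * (mu0 k * t + gam * r))
    by (unfold gam; ring).
  rewrite mu0_mul_tanh.
  assert (hsq : (k + beta * r) ^ 2 - (k + r) * (k + gam * r) = ((1 - gam) * r / 2) ^ 2)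
    by (unfold beta; field).
  pose proof (pow2_ge_0 ((1 - gam) * r / 2)). lra.
Qed.

Definition tanh_defect : R := 2 * t - tanh (2 * k).

Lemma tanh_defect_pos : 0 < tanh_defect.
Proof.
  pose proof (tanh_pos k k_pos).
  assert (E : tanh_defect = 2 * t ^ 3 / (1 + t ^ 2)).
  { unfold tanh_defect. replace (2 * k) with (k + k) by ring. rewrite tanh_plus. field. nra. }
  rewrite E. apply Rdiv_lt_0_compat; [apply Rmult_lt_0_compat; [lra | now apply pow_lt] | nra].
Qed.

Lemma tanh_mul_le (m : nat) : (2 <= m)%nat -> tanh (INR m * k) <= INR m * t - tanh_defect.
Proof.
  induction 1 as [|m hm IH].
  - unfold tanh_defect. simpl. replace ((1 + 1) * k) with (2 * k) by ring. lra.
  - rewrite S_INR. replace ((INR m + 1) * k) with (INR m * k + k) by ring.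
    pose proof (pos_INR m).
    pose proof (tanh_plus_le (INR m * k) k ltac:(nra) ltac:(lra)). lra.
Qed.

Definition omega_defect : R := mu0 k * tanh_defect / 2.

Lemma omega_defect_pos : 0 < omega_defect.
Proof.
  pose proof mu0_ge_1. pose proof tanh_defect_pos.
  unfold omega_defect. nra.
Qed.

Lemma omega_defect_lt : omega_defect < k.
Proof.
  unfold omega_defect, tanh_defect.
  replace (mu0 k * (2 * t - tanh (2 * k)) / 2) with (mu0 k * t - mu0 k * tanh (2 * k) / 2)
    by field.
  rewrite mu0_mul_tanh.
  pose proof (tanh_pos (2 * k) ltac:(lra)). pose proof mu0_ge_1.
  nra.
Qed.

Lemma omega_le_nonresonant (m : nat) A l d :
  (2 <= m)%nat -> 0 <= d -> d <= tanh_defect / 4 -> d <= omega_defect / 8 ->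
  Rabs (A - INR m * k) <= d -> Rabs l <= d ->
  omega (sqrt (A ^ 2 + l ^ 2)) <= A - omega_defect / 8.
Proof.
  intros hm hd hdt hdo hA hl.
  apply Rabs_le_between in hA. apply Rabs_le_between in hl.
  pose proof omega_defect_pos. pose proof omega_defect_lt. pose proof mu0_ge_1.
  assert (hm2 : 2 <= INR m) by (replace 2 with (INR 2) by reflexivity; now apply le_INR).
  pose proof (tanh_mul_le m hm).
  set (M := INR m * k) in *. set (e := omega_defect) in *.
  assert (hM : 2 * k <= M) by (unfold M; nra).
  set (rho := sqrt (A ^ 2 + l ^ 2)).
  assert (hrho0 : 0 <= rho) by apply sqrt_pos.
  assert (hrho : rho <= M + 2 * d).
  { apply Rsqr_incr_0_var; [|lra]. unfold rho. rewrite !Rsqr_pow2, pow2_sqrt; nra. }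
  assert (htanh : tanh rho <= INR m * t - tanh_defect / 2).
  { pose proof (tanh_le _ _ hrho). pose proof (tanh_plus_le M (2 * d) ltac:(lra) ltac:(lra)).
    pose proof (tanh_le_id (2 * d) ltac:(lra)). lra. }
  apply omega_le; [exact hrho0 | lra |].
  apply Rle_trans with (mu0 k * ((M + 2 * d) * (INR m * t - tanh_defect / 2))).
  { apply Rmult_le_compat_l; [lra|]. apply Rmult_le_compat; try lra. now apply tanh_nonneg. }
  replace (mu0 k * ((M + 2 * d) * (INR m * t - tanh_defect / 2)))
    with ((M + 2 * d) * (INR m * (mu0 k * t) - e)) by (unfold e, omega_defect; field).
  rewrite mu0_mul_tanh. fold M.
  apply Rle_trans with ((M - e / 4) ^ 2); nra.
Qed.

Definition C1 : R := Rmin ((1 - beta) / 2) (omega_defect / 8).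
Definition delta1 : R := Rmin (C1 / 2) (tanh_defect / 4).

Lemma C1_pos : 0 < C1.
Proof.
  pose proof gam_lt_1. pose proof omega_defect_pos.
  unfold C1, beta. apply Rmin_glb_lt; lra.
Qed.

Lemma delta1_pos : 0 < delta1.
Proof.
  pose proof C1_pos. pose proof tanh_defect_pos.
  unfold delta1. apply Rmin_glb_lt; lra.
Qed.

Lemma lam_true n l xi : lam k true n l xi = (0, IZR n * k + xi + omega (nk_norm k n l xi)).
Proof. unfold lam, omega. f_equal. ring. Qed.

Lemma pnorm_le_delta1 l xi : Rabs l <= delta1 -> Rabs xi <= delta1 -> pnorm l xi <= 2 * delta1.
Proof.
  intros hl hxi. pose proof delta1_pos.
  apply Rabs_le_between in hl. apply Rabs_le_between in hxi.
  apply Rsqr_incr_0_var; [|lra]. unfold pnorm. rewrite !Rsqr_pow2, pow2_sqrt; nra.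
Qed.

Lemma lam_plus_resonance_gap l xi : Rabs l <= delta1 -> Rabs xi <= delta1 ->
  Cmod (lam k true 0 l xi - lam k true (-1) l xi) >= C1 * pnorm l xi.
Proof.
  intros hl hxi.
  pose proof (pnorm_le_delta1 l xi hl hxi). pose proof gam_pos. pose proof gam_lt_1.
  assert (hC1 : C1 <= (1 - beta) / 2) by apply Rmin_l.
  assert (hd : delta1 <= C1 / 2) by apply Rmin_l.
  set (r := pnorm l xi) in *.
  assert (hbeta : 1 / 2 < beta < 1) by (unfold beta; lra).
  assert (hr0 : 0 <= r) by apply sqrt_pos.
  assert (hr : r <= (1 - beta) / 2) by lra.
  assert (hrho : nk_norm k (-1) l xi <= k + r).
  { pose proof (nk_norm_le k (-1) l xi) as htri. fold r in htri.
    replace (Rabs (IZR (-1) * k)) with k in htri by (unfold Rabs; destruct Rcase_abs; lra).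
    exact htri. }
  pose proof (omega_le_near_k r (nk_norm k (-1) l xi) hr0 (conj (sqrt_pos _) hrho)).
  pose proof (omega_ge_near_0 r ltac:(lra)).
  rewrite !lam_true, nk_norm_0, Cmod_imag_sub. fold r.
  apply Rle_ge, Rle_trans with ((1 - beta) / 2 * r); [apply Rmult_le_compat_r; lra|].
  apply Rle_trans with (r * (1 - beta - r)); [nra|].
  eapply Rle_trans; [|apply Rle_abs]. lra.
Qed.

Lemma lam_plus_nonresonant_bound n l xi : Rabs l <= delta1 -> Rabs xi <= delta1 ->
  ~ excluded n true -> Cmod (lam k true n l xi) >= C1.
Proof.
  intros hl hxi hn.
  pose proof omega_defect_lt. pose proof omega_defect_pos. pose proof C1_pos.
  assert (hC1 : C1 <= omega_defect / 8) by apply Rmin_r.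
  assert (hd : delta1 <= C1 / 2) by apply Rmin_l.
  assert (hdt : delta1 <= tanh_defect / 4) by apply Rmin_r.
  rewrite lam_true, Cmod_imag. apply Rle_ge.
  destruct (Z_le_gt_dec 1 n) as [hpos | hneg].
  - pose proof (IZR_le _ _ hpos).
    pose proof (omega_nonneg (nk_norm k n l xi) (sqrt_pos _)).
    apply Rabs_le_between in hxi.
    eapply Rle_trans; [|apply Rle_abs]. nra.
  - assert (hn2 : (n <= -2)%Z) by (unfold excluded in hn; lia).
    set (m := Z.to_nat (- n)).
    assert (hm : INR m = - IZR n).
    { unfold m. rewrite INR_IZR_INZ, Z2Nat.id by lia. apply opp_IZR. }
    assert (hm2 : (2 <= m)%nat) by lia.
    assert (hnorm : nk_norm k n l xi = sqrt ((INR m * k - xi) ^ 2 + l ^ 2)).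
    { unfold nk_norm. rewrite hm. f_equal. ring. }
    pose proof (omega_le_nonresonant m (INR m * k - xi) l delta1 hm2 (Rlt_le _ _ delta1_pos)
      hdt ltac:(lra) ltac:(now replace (INR m * k - xi - INR m * k) with (- xi) by ring;
                          rewrite Rabs_Ropp) hl).
    rewrite hnorm, <- Rabs_Ropp.
    eapply Rle_trans; [|apply Rle_abs]. rewrite hm in *. lra.
Qed.

End Dispersion.

Theorem lemma3p3 (kappa : R) (hk : 0 < kappa) :
  exists delta1 C1 : R, 0 < delta1 /\ 0 < C1 /\
  forall l xi : R, -delta1 <= l <= delta1 -> -delta1 <= xi <= delta1 ->
    Cmod (lam kappa true 0 l xi - lam kappa true (-1) l xi) >= C1 * pnorm l xi /\
    Cmod (lam kappa false 0 l xi - lam kappa false 1 l xi) >= C1 * pnorm l xi /\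
    (forall (n : Z) (s : bool), ~ excluded n s -> Cmod (lam kappa s n l xi) >= C1).
Proof.
  exists (delta1 kappa), (C1 kappa).
  split; [now apply delta1_pos|]. split; [now apply C1_pos|].
  intros l xi hl hxi.
  apply Rabs_le in hl. apply Rabs_le in hxi.
  assert (hxi' : Rabs (- xi) <= delta1 kappa) by now rewrite Rabs_Ropp.
  split; [|split].
  - now apply lam_plus_resonance_gap.
  - rewrite !lam_false_opp, <- pnorm_opp_r.
    rewrite Cmod_opp_sub. now apply lam_plus_resonance_gap.
  - intros n [|] hn.
    + now apply lam_plus_nonresonant_bound.
    + rewrite lam_false_opp, Cmod_opp.
      apply lam_plus_nonresonant_bound; auto using not_excluded_opp.
Qed.
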